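(* Let $F=A^\sharp\circ B\circ P$, where $A\in\mathbb{T}^{m\times n}$ has at least one finite entry per column, $B\in\mathbb{T}^{m\times q}$ has at least one finite entry per row, the finite entries of $A,B$ are integers, and $P\in\mathbb{R}^{q\times n}$ is row-stochastic with $P_{il}=Q_{il}/M$ for integers $Q_{il}$ and a positive integer $M$. Suppose $F$ has a bias vector, and let $v^\ast$ be its Blackwell bias. Then \[ R(F)\le\|v^\ast\|_H\le 10\,n^2\,W\,M^{\min\{k,n-1\}}, \] where $k$ is the number of nondeterministic states.
   Context: $\mathbb{T}=\mathbb{R}\cup\{-\infty\}$; $\mathbb{0}=-\infty$. For $C\in\mathbb{T}^{r\times s}$: $(C\odot z)_i=\max_j(C_{ij}+z_j)$; $C^\sharp(y)_j=\min_i(-C_{ij}+y_i)$ with $(+\infty)+(-\infty)=+\infty$; $Pz$ is the usual product with $0\cdot(-\infty)=0$; so $F(x)=A^\sharp(B\odot(Px))$ maps $\mathbb{R}^n$ to $\mathbb{R}^n$. $W=\max\{|A_{ij}-B_{ih}|: A_{ij}\ne-\infty,\ B_{ih}\ne-\infty,\ i\in[m],\ j\in[n],\ h\in[q]\}$. A state $i\in[q]$ is nondeterministic if $P_{il}>0$ and $P_{il'}>0$ for some $l\ne l'$. $\|x\|_H=\max_i x_i-\min_i x_i$. A bias vector is $v\in\mathbb{R}^n$ with $F(v)=\lambda+v$ for some $\lambda\in\mathbb{R}$; $\lambda=\rho(F)$ is unique (ergodic constant). $R(F)=\inf\{\|u\|_H: u\in\mathbb{R}^n,\ F(u)=\rho(F)+u\}$.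 For $0<\alpha<1$, $v_\alpha\in\mathbb{R}^n$ denotes the unique solution of $v_\alpha=F(\alpha v_\alpha)$ (value of the discounted game); the limit $v^\ast=\lim_{\alpha\to1^-}\bigl(v_\alpha-\rho(F)/(1-\alpha)\bigr)$ exists and is a bias vector, called the Blackwell bias. *)

From Stdlib Require Import Reals List Arith ZArith Bool.
Import ListNotations.
Open Scope R_scope.

(* Tropical numbers T = R U {-oo}: None = -oo. *)
Definition trop := option R.

(* Extended reals, used for the values of the residuation A^# before they
   are known to be finite. *)
Inductive ext : Type := Ninf | Fin (r : R) | Pinf.

Fixpoint sumR (f : nat -> R) (n : nat) : R :=
  match n with O => 0 | S k => sumR f k + f k end.

(* max / min over the index set {0,...,n-1}; for n = 0 both return f 0,
   so that the Hilbert seminorm of a vector of R^0 is 0. *)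
Definition maxI (n : nat) (f : nat -> R) : R := fold_right Rmax (f O) (map f (seq 0 n)).
Definition minI (n : nat) (f : nat -> R) : R := fold_right Rmin (f O) (map f (seq 0 n)).

Definition hilbert (n : nat) (x : nat -> R) : R := maxI n x - minI n x.

Definition matvec (n : nat) (P : nat -> nat -> R) (z : nat -> R) (h : nat) : R :=
  sumR (fun l => P h l * z l) n.

Definition omax (a b : trop) : trop :=
  match a, b with
  | None, _ => b
  | _, None => a
  | Some x, Some y => Some (Rmax x y)
  end.
Definition tprod (s : nat) (C : nat -> nat -> trop) (z : nat -> R) (i : nat) : trop :=
  fold_right omax None
    (map (fun j => match C i j with None => None | Some c => Some (c + z j) end) (seq 0 s)).

(* residuation C^#(y)_j = min_{i<r} (-C_ij + y_i), with (+oo)+(-oo) = +oo *)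
Definition emin (a b : ext) : ext :=
  match a, b with
  | Pinf, _ => b
  | _, Pinf => a
  | Ninf, _ => Ninf
  | _, Ninf => Ninf
  | Fin x, Fin y => Fin (Rmin x y)
  end.
Definition tsharp (r : nat) (C : nat -> nat -> trop) (y : nat -> trop) (j : nat) : ext :=
  fold_right emin Pinf
    (map (fun i => match C i j with
                   | None => Pinf                      (* -(-oo) + y_i = +oo *)
                   | Some c => match y i with
                               | None => Ninf
                               | Some b => Fin (- c + b)
                               end
                   end) (seq 0 r)).

(* The operator F(x) = A^#(B (.) (P x)), A : m x n, B : m x q, P : q x n.
   Under the standing hypotheses every value is finite; the default 0
   for infinite values is never used then. *)
Definition Fop (m n q : nat) (A B : nat -> nat -> trop) (P : nat -> nat -> R)
  (x : nat -> R) (j : nat) : R :=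
  match tsharp m A (tprod q B (matvec n P x)) j with
  | Fin r => r
  | _ => 0
  end.

Definition is_bias (n : nat) (F : (nat -> R) -> nat -> R) (v : nat -> R) (lam : R) : Prop :=
  forall j, (j < n)%nat -> F v j = lam + v j.

Definition is_inf (S : R -> Prop) (r : R) : Prop :=
  (forall s, S s -> r <= s) /\ (forall b, (forall s, S s -> b <= s) -> b <= r).

Definition Wconst (m n q : nat) (A B : nat -> nat -> trop) : R :=
  fold_right Rmax 0
    (flat_map (fun i => flat_map (fun j => flat_map (fun h =>
       match A i j, B i h with
       | Some a, Some b => [Rabs (a - b)]
       | _, _ => []
       end) (seq 0 q)) (seq 0 n)) (seq 0 m)).

Definition posb (x : R) : bool := if Rlt_dec 0 x then true else false.

Definition nondetb (n : nat) (P : nat -> nat -> R) (i : nat) : bool :=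
  existsb (fun l => existsb (fun l' =>
    andb (andb (negb (Nat.eqb l l')) (posb (P i l))) (posb (P i l'))) (seq 0 n)) (seq 0 n).

Definition num_nondet (n q : nat) (P : nat -> nat -> R) : nat :=
  length (filter (nondetb n P) (seq 0 q)).

From Stdlib Require Import Reals List Arith ZArith Lra Lia Classical FunctionalExtensionality.
Import ListNotations.
Open Scope R_scope.

(* Let the discount factor [al] tend to 1.  At each [al] the discounted value is attained by some
   pair of actions in every state; as there are finitely many such stationary policies, one of
   them is optimal for [al] arbitrarily close to 1, and in the limit the Blackwell bias [v*]
   solves the one-player equation [v* = r - lam + P_row v*] of that policy, with rewards
   [|r| <= W], hence [|r - lam| <= 2W].  Such a solution reaches, from its maximum, a state
   where it is [<= 0] along a simple path of the policy graph, which has at most [n - 1] edges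
   and passes at most [min(k, n - 1)] times through nondeterministic states; going backwards
   along it, the gap to the maximum grows by at most [2W] per edge and is multiplied by at
   most [M] at nondeterministic states (positive probabilities are at least [1/M], and equal
   to 1 at deterministic states).
   Hence [max v* <= 2W (n - 1) M^min(k, n - 1)], and symmetrically for [-v*].  Finally [v*] is
   itself a bias vector because the operator is nonexpansive for the sup norm. *)

Lemma Rabs_le_between (x a : R) : Rabs x <= a -> - a <= x <= a.
Proof.
  intros H. pose proof (Rle_abs x). pose proof (Rle_abs (- x)). rewrite Rabs_Ropp in *. lra.
Qed.

Lemma sumR_ext (f g : nat -> R) (n : nat) :
  (forall l, (l < n)%nat -> f l = g l) -> sumR f n = sumR g n.
Proof.
  induction n as [|n IH]; intros H; simpl; auto.
  rewrite IH by (intros; apply H; lia). now rewrite (H n) by lia.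
Qed.

Lemma sumR_le (f g : nat -> R) (n : nat) :
  (forall l, (l < n)%nat -> f l <= g l) -> sumR f n <= sumR g n.
Proof.
  induction n as [|n IH]; intros H; simpl; [lra|].
  assert (sumR f n <= sumR g n) by (apply IH; intros; apply H; lia).
  assert (f n <= g n) by (apply H; lia).
  lra.
Qed.

Lemma sumR_plus (f g : nat -> R) (n : nat) :
  sumR (fun l => f l + g l) n = sumR f n + sumR g n.
Proof. induction n as [|n IH]; simpl; [lra|]. rewrite IH; ring. Qed.

Lemma sumR_scal (f : nat -> R) (c : R) (n : nat) :
  sumR (fun l => c * f l) n = c * sumR f n.
Proof. induction n as [|n IH]; simpl; [lra|]. rewrite IH; ring. Qed.

Lemma sumR_nonneg (f : nat -> R) (n : nat) :
  (forall l, (l < n)%nat -> 0 <= f l) -> 0 <= sumR f n.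
Proof.
  induction n as [|n IH]; intros H; simpl; [lra|].
  apply Rplus_le_le_0_compat; [apply IH; intros|apply H]; auto; lia.
Qed.

Lemma sumR_ge_term (f : nat -> R) (n s : nat) :
  (forall l, (l < n)%nat -> 0 <= f l) -> (s < n)%nat -> f s <= sumR f n.
Proof.
  induction n as [|n IH]; intros H Hs; simpl; [lia|].
  assert (0 <= f n) by (apply H; lia).
  destruct (Nat.eq_dec s n) as [->|Hne].
  - assert (0 <= sumR f n) by (apply sumR_nonneg; intros; apply H; lia). lra.
  - assert (f s <= sumR f n) by (apply IH; [intros; apply H|]; lia). lra.
Qed.

Lemma sumR_eq_term (f : nat -> R) (n s : nat) :
  (forall l, (l < n)%nat -> l <> s -> f l = 0) -> (s < n)%nat -> sumR f n = f s.
Proof.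
  intros H Hs.
  assert (Hle : forall k, (k <= n)%nat -> sumR f k = if Nat.ltb s k then f s else 0).
  { induction k as [|k IH]; intros Hk; simpl; [reflexivity|].
    rewrite IH by lia.
    destruct (Nat.ltb_spec s k), (Nat.ltb_spec s (S k)); try lia.
    - rewrite (H k) by lia. ring.
    - replace k with s by lia. ring.
    - rewrite (H k) by lia. ring. }
  rewrite Hle by lia. destruct (Nat.ltb_spec s n); [reflexivity | lia].
Qed.

Definition prob_vector (n : nat) (p : nat -> R) : Prop :=
  (forall l, (l < n)%nat -> 0 <= p l) /\ sumR p n = 1.

Definition stochastic (n q : nat) (P : nat -> nat -> R) : Prop :=
  forall h, (h < q)%nat -> prob_vector n (P h).

Lemma matvec_ext (n : nat) (P : nat -> nat -> R) (h : nat) (x y : nat -> R) :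
  (forall l, (l < n)%nat -> x l = y l) -> matvec n P x h = matvec n P y h.
Proof. intros H. apply sumR_ext. intros l Hl. now rewrite H. Qed.

Lemma matvec_plus (n : nat) (P : nat -> nat -> R) (h : nat) (x y : nat -> R) :
  matvec n P (fun l => x l + y l) h = matvec n P x h + matvec n P y h.
Proof. unfold matvec. rewrite <- sumR_plus. apply sumR_ext. intros; ring. Qed.

Lemma matvec_scal (n : nat) (P : nat -> nat -> R) (h : nat) (x : nat -> R) (a : R) :
  matvec n P (fun l => a * x l) h = a * matvec n P x h.
Proof. unfold matvec. rewrite <- sumR_scal. apply sumR_ext. intros; ring. Qed.

Section ProbabilityRow.

Variables (n : nat) (P : nat -> nat -> R) (h : nat).
Hypothesis Hrow : prob_vector n (P h).

Lemma matvec_shift (x : nat -> R) (c : R) :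
  matvec n P (fun l => x l + c) h = matvec n P x h + c.
Proof.
  destruct Hrow as [_ Hsum]. unfold matvec.
  rewrite (sumR_ext _ (fun l => P h l * x l + c * P h l)) by (intros; ring).
  rewrite sumR_plus, sumR_scal, Hsum. ring.
Qed.

Lemma matvec_le_shift (x y : nat -> R) (e : R) :
  (forall l, (l < n)%nat -> x l <= y l + e) -> matvec n P x h <= matvec n P y h + e.
Proof.
  destruct Hrow as [Hnn _]. intros Hxy.
  rewrite <- matvec_shift. apply sumR_le. intros l Hl.
  apply Rmult_le_compat_l; auto.
Qed.

Lemma matvec_le_of_support (z : nat -> R) (c : R) :
  (forall l, (l < n)%nat -> 0 < P h l -> z l <= c) -> matvec n P z h <= c.
Proof.
  destruct Hrow as [Hnn Hsum]. intros Hz.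
  apply Rle_trans with (sumR (fun l => c * P h l) n).
  - apply sumR_le. intros l Hl. destruct (Hnn l Hl) as [Hp|Hp].
    + specialize (Hz l Hl Hp). nra.
    + rewrite <- Hp. lra.
  - rewrite sumR_scal, Hsum. lra.
Qed.

Lemma matvec_ge_of_support (z : nat -> R) (c : R) :
  (forall l, (l < n)%nat -> 0 < P h l -> c <= z l) -> c <= matvec n P z h.
Proof.
  intros Hz.
  assert (matvec n P (fun l => -1 * z l) h <= - c).
  { apply matvec_le_of_support. intros l Hl Hp. specialize (Hz l Hl Hp). lra. }
  rewrite matvec_scal in H. lra.
Qed.

Lemma matvec_le_sub_weight (u : nat -> R) (K : R) (s : nat) :
  (forall l, (l < n)%nat -> u l <= K) -> (s < n)%nat ->
  matvec n P u h <= K - P h s * (K - u s).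
Proof.
  destruct Hrow as [Hnn Hsum]. intros HK Hs.
  assert (E : matvec n P u h = K - sumR (fun l => P h l * (K - u l)) n).
  { unfold matvec.
    rewrite (sumR_ext _ (fun l => K * P h l + -1 * (P h l * (K - u l)))) by (intros; ring).
    rewrite sumR_plus, !sumR_scal, Hsum. ring. }
  assert (P h s * (K - u s) <= sumR (fun l => P h l * (K - u l)) n).
  { apply (sumR_ge_term (fun l => P h l * (K - u l))); auto.
    intros l Hl. specialize (Hnn l Hl). specialize (HK l Hl). nra. }
  lra.
Qed.

End ProbabilityRow.

Lemma exists_argmax_on (Pr : nat -> Prop) (f : nat -> R) (n : nat) :
  (exists s, (s < n)%nat /\ Pr s) ->
  exists s, (s < n)%nat /\ Pr s /\ forall t, (t < n)%nat -> Pr t -> f t <= f s.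
Proof.
  induction n as [|n IH]; intros [s [Hs Hp]]; [lia|].
  assert (Hlast : forall g : nat -> Prop,
            (forall t, (t < n)%nat -> Pr t -> g t) -> (Pr n -> g n) ->
            forall t, (t < S n)%nat -> Pr t -> g t).
  { intros g Hg Hn t Ht Hpt. destruct (Nat.eq_dec t n) as [->|]; auto. apply Hg; auto; lia. }
  destruct (classic (exists s, (s < n)%nat /\ Pr s)) as [Hex|Hnex].
  - destruct (IH Hex) as [s1 [Hs1 [Hp1 Hmax]]].
    destruct (classic (Pr n)) as [Hpn|Hpn]; [destruct (Rle_dec (f n) (f s1))|].
    + exists s1. repeat split; auto. apply (Hlast (fun t => f t <= f s1)); auto.
    + exists n. repeat split; auto. apply (Hlast (fun t => f t <= f n)); [|lra].
      intros t Ht Hpt. specialize (Hmax t Ht Hpt). lra.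
    + exists s1. repeat split; auto. apply (Hlast (fun t => f t <= f s1)); tauto.
  - assert (s = n) as ->.
    { destruct (Nat.eq_dec s n); auto. exfalso. apply Hnex. exists s. split; auto; lia. }
    exists n. repeat split; auto. apply (Hlast (fun t => f t <= f n)); [|lra].
    intros t Ht Hpt. exfalso. apply Hnex. eauto.
Qed.

Lemma exists_argmin_on (Pr : nat -> Prop) (f : nat -> R) (n : nat) :
  (exists s, (s < n)%nat /\ Pr s) ->
  exists s, (s < n)%nat /\ Pr s /\ forall t, (t < n)%nat -> Pr t -> f s <= f t.
Proof.
  intros H. destruct (exists_argmax_on Pr (fun x => - f x) n H) as [s [Hs [Hp Hmax]]].
  exists s. repeat split; auto. intros t Ht Hpt. specialize (Hmax t Ht Hpt). lra.
Qed.

Lemma fold_Rmax_ge (L : list R) (a : R) :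
  a <= fold_right Rmax a L /\ forall x, In x L -> x <= fold_right Rmax a L.
Proof.
  induction L as [|b L [IH1 IH2]]; simpl; split; try tauto; try lra.
  - eapply Rle_trans; [apply IH1 | apply Rmax_r].
  - intros x [<-|Hx]; [apply Rmax_l|]. eapply Rle_trans; [apply IH2; auto | apply Rmax_r].
Qed.

Lemma fold_Rmin_le (L : list R) (a : R) : fold_right Rmin a L <= a.
Proof.
  induction L as [|b L IH]; simpl; [lra|]. eapply Rle_trans; [apply Rmin_r | apply IH].
Qed.

Lemma hilbert_nonneg (n : nat) (f : nat -> R) : 0 <= hilbert n f.
Proof.
  unfold hilbert, maxI, minI.
  pose proof (proj1 (fold_Rmax_ge (map f (seq 0 n)) (f 0%nat))).
  pose proof (fold_Rmin_le (map f (seq 0 n)) (f 0%nat)).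
  lra.
Qed.

Lemma fold_Rmax_lub (L : list R) (a c : R) :
  a <= c -> (forall x, In x L -> x <= c) -> fold_right Rmax a L <= c.
Proof.
  intros Ha HL. induction L as [|b L IH]; simpl; auto.
  apply Rmax_lub; [apply HL; left|apply IH; intros; apply HL; right]; auto.
Qed.

Lemma fold_Rmin_glb (L : list R) (a c : R) :
  c <= a -> (forall x, In x L -> c <= x) -> c <= fold_right Rmin a L.
Proof.
  intros Ha HL. induction L as [|b L IH]; simpl; auto.
  apply Rmin_glb; [apply HL; left|apply IH; intros; apply HL; right]; auto.
Qed.

Lemma hilbert_le (n : nat) (f : nat -> R) (C : R) :
  0 <= C -> (forall j l, (j < n)%nat -> (l < n)%nat -> f j - f l <= C) -> hilbert n f <= C.
Proof.
  intros HC H. destruct n as [|n].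
  - unfold hilbert, maxI, minI; simpl. lra.
  - destruct (exists_argmax_on (fun _ => True) f (S n)) as [j [Hj [_ Hjmax]]];
      [exists 0%nat; split; [lia|auto]|].
    destruct (exists_argmin_on (fun _ => True) f (S n)) as [l [Hl [_ Hlmin]]];
      [exists 0%nat; split; [lia|auto]|].
    assert (maxI (S n) f <= f j).
    { apply fold_Rmax_lub; [apply Hjmax; auto; lia|].
      intros x Hx. apply in_map_iff in Hx. destruct Hx as [t [<- Ht]].
      apply in_seq in Ht. apply Hjmax; auto; lia. }
    assert (f l <= minI (S n) f).
    { apply fold_Rmin_glb; [apply Hlmin; auto; lia|].
      intros x Hx. apply in_map_iff in Hx. destruct Hx as [t [<- Ht]].
      apply in_seq in Ht. apply Hlmin; auto; lia. }
    specialize (H j l Hj Hl). unfold hilbert. lra.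
Qed.

Lemma fold_omax_spec (L : list nat) (g : nat -> trop) :
  (fold_right omax None (map g L) = None /\ forall x, In x L -> g x = None) \/
  exists y, fold_right omax None (map g L) = Some y /\ (exists x, In x L /\ g x = Some y) /\
            (forall x t, In x L -> g x = Some t -> t <= y).
Proof.
  induction L as [|a L IH]; simpl; [left; tauto|].
  destruct IH as [[-> H]|[y [-> [[x [Hx Hg]] H]]]]; destruct (g a) as [t|] eqn:Ga; simpl.
  - right. exists t. split; [reflexivity|]. split; [exists a; auto|].
    intros x t' [<-|Hx] Hg; [rewrite Ga in Hg; injection Hg; lra|].
    rewrite H in Hg; [discriminate|auto].
  - left. split; [reflexivity|]. intros x [<-|Hx]; auto.
  - right. exists (Rmax t y). split; [reflexivity|]. split.
    + destruct (Rle_dec t y).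
      * rewrite Rmax_right by auto. eauto.
      * rewrite Rmax_left by lra. eauto.
    + intros x' t' [<-|Hx'] Hg'.
      * rewrite Ga in Hg'. injection Hg' as <-. apply Rmax_l.
      * eapply Rle_trans; [eapply H; eauto | apply Rmax_r].
  - right. exists y. split; [reflexivity|]. split; [eauto|].
    intros x' t' [<-|Hx'] Hg'; [congruence|eauto].
Qed.

Lemma fold_emin_spec (L : list nat) (g : nat -> ext) :
  (forall x, In x L -> g x <> Ninf) ->
  (fold_right emin Pinf (map g L) = Pinf /\ forall x, In x L -> g x = Pinf) \/
  exists r, fold_right emin Pinf (map g L) = Fin r /\ (exists x, In x L /\ g x = Fin r) /\
            (forall x t, In x L -> g x = Fin t -> r <= t).
Proof.
  induction L as [|a L IH]; simpl; intros HN; [left; tauto|].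
  assert (Ha := HN a (or_introl eq_refl)).
  destruct (IH (fun x Hx => HN x (or_intror Hx))) as [[-> H]|[y [-> [[x [Hx Hg]] H]]]];
    destruct (g a) as [|t|] eqn:Ga; simpl; try congruence.
  - right. exists t. split; [reflexivity|]. split; [exists a; auto|].
    intros x t' [<-|Hx] Hg; [rewrite Ga in Hg; injection Hg; lra|].
    rewrite H in Hg; [discriminate|auto].
  - left. split; [reflexivity|]. intros x [<-|Hx]; auto.
  - right. exists (Rmin t y). split; [reflexivity|]. split.
    + destruct (Rle_dec t y).
      * rewrite Rmin_left by auto. eauto.
      * rewrite Rmin_right by lra. eauto.
    + intros x' t' [<-|Hx'] Hg'.
      * rewrite Ga in Hg'. injection Hg' as <-. apply Rmin_l.
      * eapply Rle_trans; [apply Rmin_r | eapply H; eauto].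
  - right. exists y. split; [reflexivity|]. split; [eauto|].
    intros x' t' [<-|Hx'] Hg'; [congruence|eauto].
Qed.

(* The junk value [0] for [-oo] is never taken when row [i] of [B] has a finite entry. *)
Definition tprod_val (q : nat) (B : nat -> nat -> trop) (y : nat -> R) (i : nat) : R :=
  match tprod q B y i with Some v => v | None => 0 end.

Lemma tprod_spec (q : nat) (B : nat -> nat -> trop) (y : nat -> R) (i : nat) :
  (exists h, (h < q)%nat /\ B i h <> None) ->
  tprod q B y i = Some (tprod_val q B y i) /\
  (exists h b, (h < q)%nat /\ B i h = Some b /\ tprod_val q B y i = b + y h) /\
  (forall h b, (h < q)%nat -> B i h = Some b -> b + y h <= tprod_val q B y i).
Proof.
  intros [h0 [Hh0 Hb0]].
  set (g := (fun j => match B i j with None => None | Some c => Some (c + y j) end) : nat -> trop).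
  assert (E : tprod q B y i = fold_right omax None (map g (seq 0 q))) by reflexivity.
  unfold tprod_val. rewrite E.
  destruct (fold_omax_spec (seq 0 q) g) as [[_ H]|[v [-> [[h [Hh Hg]] H]]]].
  - exfalso. specialize (H h0 (proj2 (in_seq q 0 h0) ltac:(lia))).
    unfold g in H. destruct (B i h0); congruence.
  - split; [reflexivity|]. split.
    + apply in_seq in Hh. unfold g in Hg. destruct (B i h) as [b|] eqn:Bh; [|discriminate].
      injection Hg as <-. exists h, b. repeat split; auto. lia.
    + intros h' b Hh' Hb. apply (H h'); [apply in_seq; lia|]. unfold g. now rewrite Hb.
Qed.

Definition finite_cols (m n : nat) (A : nat -> nat -> trop) : Prop :=
  forall j, (j < n)%nat -> exists i, (i < m)%nat /\ A i j <> None.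

Definition finite_rows (m q : nat) (B : nat -> nat -> trop) : Prop :=
  forall i, (i < m)%nat -> exists h, (h < q)%nat /\ B i h <> None.

Section ShapleyOperator.

Variables (m n q : nat) (A B : nat -> nat -> trop) (P : nat -> nat -> R).
Hypothesis HA : finite_cols m n A.
Hypothesis HB : finite_rows m q B.

Lemma Fop_spec (x : nat -> R) (j : nat) : (j < n)%nat ->
  (exists i a, (i < m)%nat /\ A i j = Some a /\
     Fop m n q A B P x j = - a + tprod_val q B (matvec n P x) i) /\
  (forall i a, (i < m)%nat -> A i j = Some a ->
     Fop m n q A B P x j <= - a + tprod_val q B (matvec n P x) i).
Proof.
  intros Hj. unfold Fop, tsharp.
  set (y := matvec n P x).
  assert (HT : forall i, In i (seq 0 m) -> tprod q B y i = Some (tprod_val q B y i)).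
  { intros i Hi. apply in_seq in Hi. apply (tprod_spec q B y i (HB i ltac:(lia))). }
  set (g := fun i => match A i j with
                     | None => Pinf
                     | Some c => match tprod q B y i with None => Ninf | Some b => Fin (- c + b) end
                     end).
  destruct (fold_emin_spec (seq 0 m) g) as [[_ H]|[r [E [[i0 [Hi0 Hg]] H]]]].
  - intros i Hi. unfold g. rewrite (HT i Hi). destruct (A i j); discriminate.
  - exfalso. destruct (HA j Hj) as [i [Hi Ha]].
    assert (Hin : In i (seq 0 m)) by (apply in_seq; lia).
    specialize (H i Hin). unfold g in H. rewrite (HT i Hin) in H. destruct (A i j); congruence.
  - rewrite E. split.
    + unfold g in Hg. rewrite (HT i0 Hi0) in Hg. apply in_seq in Hi0.
      destruct (A i0 j) as [a|] eqn:Ai0; [|discriminate]. injection Hg as <-.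
      exists i0, a. repeat split; auto. lia.
    + intros i a Hi Ha. apply (H i); [apply in_seq; lia|].
      unfold g. rewrite Ha, (HT i (proj2 (in_seq m 0 i) ltac:(lia))). reflexivity.
Qed.

Lemma Fop_attained (x : nat -> R) (j : nat) : (j < n)%nat ->
  exists i h a b, (i < m)%nat /\ (h < q)%nat /\ A i j = Some a /\ B i h = Some b /\
    Fop m n q A B P x j = - a + b + matvec n P x h.
Proof.
  intros Hj. destruct (Fop_spec x j Hj) as [[i [a [Hi [Ha E]]]] _].
  destruct (tprod_spec q B (matvec n P x) i (HB i Hi)) as [_ [[h [b [Hh [Hb Eb]]]] _]].
  exists i, h, a, b. repeat split; auto. rewrite E, Eb. ring.
Qed.

Hypothesis HP : stochastic n q P.

Lemma Fop_le_shift (x y : nat -> R) (e : R) (j : nat) : (j < n)%nat ->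
  (forall l, (l < n)%nat -> x l <= y l + e) ->
  Fop m n q A B P x j <= Fop m n q A B P y j + e.
Proof.
  intros Hj Hxy.
  destruct (Fop_spec y j Hj) as [[i [a [Hi [Ha ->]]]] _].
  destruct (Fop_spec x j Hj) as [_ Hx]. specialize (Hx i a Hi Ha).
  destruct (tprod_spec q B (matvec n P x) i (HB i Hi)) as [_ [[h [b [Hh [Hb Ex]]]] _]].
  destruct (tprod_spec q B (matvec n P y) i (HB i Hi)) as [_ [_ Hy]].
  specialize (Hy h b Hh Hb).
  pose proof (matvec_le_shift n P h (HP h Hh) x y e Hxy).
  lra.
Qed.

Lemma Fop_shift (x : nat -> R) (c : R) (j : nat) : (j < n)%nat ->
  Fop m n q A B P (fun l => x l + c) j = Fop m n q A B P x j + c.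
Proof.
  intros Hj. apply Rle_antisym.
  - apply Fop_le_shift; auto. intros; lra.
  - assert (Fop m n q A B P x j <= Fop m n q A B P (fun l => x l + c) j + - c)
      by (apply Fop_le_shift; auto; intros; lra).
    lra.
Qed.

Lemma Fop_nonexpansive (x y : nat -> R) (e : R) (j : nat) : (j < n)%nat ->
  (forall l, (l < n)%nat -> Rabs (x l - y l) <= e) ->
  Rabs (Fop m n q A B P x j - Fop m n q A B P y j) <= e.
Proof.
  intros Hj Hxy.
  assert (Fop m n q A B P x j <= Fop m n q A B P y j + e).
  { apply Fop_le_shift; auto. intros l Hl.
    pose proof (Rabs_le_between _ _ (Hxy l Hl)). lra. }
  assert (Fop m n q A B P y j <= Fop m n q A B P x j + e).
  { apply Fop_le_shift; auto. intros l Hl.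
    pose proof (Rabs_le_between _ _ (Hxy l Hl)). lra. }
  apply Rabs_le. lra.
Qed.

End ShapleyOperator.

Lemma Wconst_ge (m n q : nat) (A B : nat -> nat -> trop) (i j h : nat) (a b : R) :
  (i < m)%nat -> (j < n)%nat -> (h < q)%nat -> A i j = Some a -> B i h = Some b ->
  Rabs (a - b) <= Wconst m n q A B.
Proof.
  intros Hi Hj Hh Ha Hb. apply (proj2 (fold_Rmax_ge _ 0)).
  apply in_flat_map. exists i. split; [apply in_seq; lia|].
  apply in_flat_map. exists j. split; [apply in_seq; lia|].
  apply in_flat_map. exists h. split; [apply in_seq; lia|].
  rewrite Ha, Hb. left; reflexivity.
Qed.

Lemma Wconst_nonneg (m n q : nat) (A B : nat -> nat -> trop) : 0 <= Wconst m n q A B.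
Proof. apply (proj1 (fold_Rmax_ge _ 0)). Qed.

Definition often_near1 (Pr : R -> Prop) : Prop :=
  forall dl, 0 < dl -> exists al, 0 < al < 1 /\ 1 - dl < al /\ Pr al.

Lemma often_near1_True : often_near1 (fun _ => True).
Proof.
  intros dl Hdl. exists (Rmax (1/2) (1 - dl/2)).
  pose proof (Rmax_l (1/2) (1 - dl/2)). pose proof (Rmax_r (1/2) (1 - dl/2)).
  repeat split; try lra. apply Rmax_lub_lt; lra.
Qed.

Lemma often_near1_pigeonhole (X : Type) (L : list X) (Pr : R -> Prop) (Qx : X -> R -> Prop) :
  often_near1 Pr -> (forall al, 0 < al < 1 -> Pr al -> exists x, In x L /\ Qx x al) ->
  exists x, In x L /\ often_near1 (fun al => Pr al /\ Qx x al).
Proof.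
  revert Pr. induction L as [|x L IH]; intros Pr HF HQ.
  - exfalso. destruct (HF 1 ltac:(lra)) as [al [Hal [_ Hp]]].
    destruct (HQ al Hal Hp) as [x [[] _]].
  - destruct (classic (often_near1 (fun al => Pr al /\ Qx x al))) as [H|H].
    { exists x. split; [left|]; auto. }
    (* If [x] is eventually not chosen, the remaining candidates are chosen often. *)
    apply not_all_ex_not in H. destruct H as [d0 H]. apply imply_to_and in H.
    destruct H as [Hd0 H].
    destruct (IH (fun al => Pr al /\ 1 - d0 < al)) as [y [Hy HFy]].
    + intros dl Hdl.
      destruct (HF (Rmin dl d0) (Rmin_glb_lt _ _ _ Hdl Hd0)) as [al [Hal [Hal2 Hp]]].
      pose proof (Rmin_l dl d0). pose proof (Rmin_r dl d0).
      exists al. repeat split; auto; lra.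
    + intros al Hal [Hp Hd]. destruct (HQ al Hal Hp) as [z [[<-|Hz] Hq]]; [|eauto].
      exfalso. apply H. exists al. repeat split; tauto.
    + exists y. split; [right; auto|]. intros dl Hdl.
      destruct (HFy dl Hdl) as [al [Hal [Hal2 [[Hp _] Hq]]]]. exists al. auto.
Qed.

Lemma often_near1_choice (X : Type) (x0 : X) (L : list X) (G : R -> X -> nat -> Prop) (n : nat) :
  (forall al, 0 < al < 1 -> forall j, (j < n)%nat -> exists x, In x L /\ G al x j) ->
  exists c : nat -> X, often_near1 (fun al => forall j, (j < n)%nat -> G al (c j) j).
Proof.
  intros HG. assert (Hk : (n <= n)%nat) by lia. revert Hk. generalize n at 1 3 as k.
  induction k as [|k IH]; intros Hk.
  - exists (fun _ => x0). intros dl Hdl.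
    destruct (often_near1_True dl Hdl) as [al [H1 [H2 _]]].
    exists al. split; [|split]; auto. intros; lia.
  - destruct (IH ltac:(lia)) as [c Hc].
    destruct (often_near1_pigeonhole X L _ (fun x al => G al x k) Hc) as [x [_ HF]].
    { intros al Hal _. apply HG; auto; lia. }
    exists (fun j => if Nat.eqb j k then x else c j). intros dl Hdl.
    destruct (HF dl Hdl) as [al [H1 [H2 [H3 H4]]]]. exists al. repeat split; auto; try lra.
    intros j Hj. destruct (Nat.eqb_spec j k) as [->|Hne]; auto. apply H3. lia.
Qed.

Lemma limit1_in_uniform (n : nat) (g : R -> nat -> R) (v : nat -> R) (D : R -> Prop) (x0 : R) :
  (forall j, (j < n)%nat -> limit1_in (fun al => g al j) D (v j) x0) ->
  forall e, 0 < e -> exists dl, 0 < dl /\ forall al, D al -> Rabs (al - x0) < dl ->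
    forall j, (j < n)%nat -> Rabs (g al j - v j) < e.
Proof.
  induction n as [|n IH]; intros H e He.
  - exists 1. split; [lra|]. intros; lia.
  - destruct (IH (fun j Hj => H j ltac:(lia)) e He) as [d1 [Hd1 H1]].
    destruct (H n ltac:(lia) e He) as [d2 [Hd2 H2]]. simpl in H2. unfold R_dist in H2.
    exists (Rmin d1 d2). split; [apply Rmin_glb_lt; auto|].
    pose proof (Rmin_l d1 d2). pose proof (Rmin_r d1 d2).
    intros al Hal Hd j Hj. destruct (Nat.eq_dec j n) as [->|Hne].
    + apply H2. split; auto. lra.
    + apply H1; [auto | lra | lia].
Qed.

Lemma eq0_of_Rabs_le_eps (X C : R) : (forall e, 0 < e < 1 -> Rabs X <= e * C) -> X = 0.
Proof.
  intros H. destruct (Req_dec X 0) as [|Hne]; auto. exfalso.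
  assert (Ha : 0 < Rabs X) by (apply Rabs_pos_lt; auto).
  assert (HC : 0 <= C) by (specialize (H (1/2) ltac:(lra)); lra).
  set (e := Rmin (1/2) (Rabs X / (2 * (C + 1)))).
  assert (He1 : e <= Rabs X / (2 * (C + 1))) by apply Rmin_r.
  assert (He0 : 0 < e) by (apply Rmin_glb_lt; [lra | apply Rdiv_lt_0_compat; lra]).
  assert (He2 : e <= 1/2) by apply Rmin_l.
  specialize (H e ltac:(lra)).
  assert (e * (2 * (C + 1)) <= Rabs X).
  { apply Rmult_le_compat_r with (r := 2 * (C + 1)) in He1; [|lra].
    unfold Rdiv in He1. rewrite Rmult_assoc, Rinv_l in He1 by lra. lra. }
  nra.
Qed.

Section PolicyEquation.

Variables (n q : nat) (P : nat -> nat -> R) (row : nat -> nat).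
Hypothesis HP : stochastic n q P.
Hypothesis Hrow : forall j, (j < n)%nat -> (row j < q)%nat.

Definition discounted_approx (u d : nat -> R) : Prop :=
  forall eps, 0 < eps -> exists al, 0 < al < 1 /\ 1 - eps < al /\ exists w : nat -> R,
    (forall j, (j < n)%nat -> w j = d j + al * matvec n P w (row j)) /\
    (forall j, (j < n)%nat -> Rabs (w j - u j) < eps).

Lemma discounted_approx_opp (u d : nat -> R) :
  discounted_approx u d -> discounted_approx (fun l => - u l) (fun l => - d l).
Proof.
  intros H e He. destruct (H e He) as [al [Hal [Hal2 [w [Hw Hc]]]]].
  exists al. split; [|split]; auto. exists (fun l => - w l). split.
  - intros j Hj. rewrite Hw by auto.
    rewrite (matvec_ext n P (row j) (fun l => - w l) (fun l => -1 * w l)) by (intros; ring).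
    rewrite matvec_scal. ring.
  - intros j Hj. replace (- w j - - u j) with (- (w j - u j)) by ring.
    rewrite Rabs_Ropp. auto.
Qed.

Lemma discounted_approx_policy_eq (u d : nat -> R) : discounted_approx u d ->
  forall j, (j < n)%nat -> u j = d j + matvec n P u (row j).
Proof.
  intros H j Hj. set (mu := matvec n P u (row j)).
  cut (u j - d j - mu = 0); [lra|].
  apply (eq0_of_Rabs_le_eps _ (2 + Rabs mu)). intros e He.
  destruct (H e ltac:(lra)) as [al [Hal [Hal2 [w [Hw Hc]]]]].
  assert (Hdiff : - e <= matvec n P w (row j) - mu <= e).
  { assert (Hr : prob_vector n (P (row j))) by (apply HP, Hrow; auto).
    assert (mu <= matvec n P w (row j) + e).
    { apply matvec_le_shift; auto. intros l Hl. specialize (Hc l Hl). apply Rabs_def2 in Hc. lra. }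
    assert (matvec n P w (row j) <= mu + e).
    { apply matvec_le_shift; auto. intros l Hl. specialize (Hc l Hl). apply Rabs_def2 in Hc. lra. }
    lra. }
  specialize (Hw j Hj). pose proof (Hc j Hj) as Hcj. apply Rabs_def2 in Hcj.
  pose proof (Rle_abs mu). pose proof (Rle_abs (- mu)). rewrite Rabs_Ropp in *.
  (* u j - d j - mu = (u j - w j) + al (P w - mu) - (1 - al) mu *)
  apply Rabs_le. split; nra.
Qed.

Lemma policy_eq_nonneg_at_max (u d : nat -> R) :
  (forall j, (j < n)%nat -> u j = d j + matvec n P u (row j)) -> (0 < n)%nat ->
  exists j, (j < n)%nat /\ 0 <= d j.
Proof.
  intros Hu Hn.
  destruct (exists_argmax_on (fun _ => True) u n) as [j [Hj [_ Hmax]]];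
    [exists 0%nat; auto|].
  exists j. split; auto.
  assert (matvec n P u (row j) <= u j).
  { apply matvec_le_of_support; [apply HP, Hrow; auto|]. intros l Hl _. apply Hmax; auto. }
  pose proof (Hu j Hj). lra.
Qed.

Lemma discounted_approx_reward_bound (u r : nat -> R) (lam W : R) :
  discounted_approx u (fun j => r j - lam) -> (forall j, (j < n)%nat -> Rabs (r j) <= W) ->
  forall j, (j < n)%nat -> Rabs (r j - lam) <= 2 * W.
Proof.
  intros H Hr j Hj.
  destruct (policy_eq_nonneg_at_max u _ (discounted_approx_policy_eq _ _ H) ltac:(lia))
    as [j1 [Hj1 H1]].
  destruct (policy_eq_nonneg_at_max _ _
              (discounted_approx_policy_eq _ _ (discounted_approx_opp _ _ H)) ltac:(lia))
    as [j2 [Hj2 H2]].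
  pose proof (Rabs_le_between _ _ (Hr j Hj)). pose proof (Rabs_le_between _ _ (Hr j1 Hj1)).
  pose proof (Rabs_le_between _ _ (Hr j2 Hj2)).
  apply Rabs_le. lra.
Qed.

Definition edge (s t : nat) : Prop := (t < n)%nat /\ 0 < P (row s) t.

(* [L] lists, in order, the vertices that the path from [s] to [t] leaves. *)
Fixpoint walk (s t : nat) (L : list nat) : Prop :=
  match L with
  | [] => s = t
  | x :: L' => x = s /\ exists s2, edge s s2 /\ walk s2 t L'
  end.

Lemma walk_app (L1 L2 : list nat) (s t : nat) :
  walk s t (L1 ++ L2) <-> exists mid, walk s mid L1 /\ walk mid t L2.
Proof.
  revert s. induction L1 as [|x L1 IH]; simpl; intros s; split.
  - intros H. exists s. auto.
  - intros [mid [-> H]]. auto.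
  - intros [-> [s2 [He Hw]]]. apply IH in Hw. destruct Hw as [mid [H1 H2]].
    exists mid. split; [split; [reflexivity|eauto]|auto].
  - intros [mid [[-> [s2 [He Hw]]] H2]]. split; auto. exists s2. split; auto. apply IH. eauto.
Qed.

Lemma walk_snoc (s x t : nat) (L : list nat) :
  walk s x L -> edge x t -> walk s t (L ++ [x]).
Proof. intros H He. apply walk_app. exists x. split; auto. simpl. eauto. Qed.

Lemma walk_in_range (s t : nat) (L : list nat) :
  walk s t L -> (s < n)%nat -> forall x, In x (t :: L) -> (x < n)%nat.
Proof.
  revert s. induction L as [|y L IH]; simpl; intros s H Hs x Hx.
  - subst. destruct Hx as [<-|[]]; auto.
  - destruct H as [-> [s2 [[Hs2 _] Hw]]]. destruct Hx as [<-|[<-|Hx]]; auto.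
    + apply (IH s2 Hw Hs2). left; auto.
    + apply (IH s2 Hw Hs2). right; auto.
Qed.

(* Cutting loops, both at repeated vertices and at repeated policy rows (two vertices with
   the same row have the same successors). *)
Lemma walk_simplify (s t : nat) (L : list nat) : walk s t L ->
  exists L', walk s t L' /\ NoDup (t :: L') /\ NoDup (map row L').
Proof.
  revert t. induction L as [|x L IH] using rev_ind; intros t H.
  - exists []. simpl in *. repeat constructor; auto.
  - apply walk_app in H. destruct H as [mid [Hw1 Hw2]]. simpl in Hw2.
    destruct Hw2 as [-> [s2 [He ->]]].
    destruct (IH mid Hw1) as [L2 [Hw [Hnd Hndr]]].
    apply NoDup_cons_iff in Hnd. destruct Hnd as [HxL2 HndL2].
    destruct (in_dec Nat.eq_dec t (mid :: L2)) as [[<-|Hin]|Hnin].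
    + exists L2. repeat split; auto. constructor; auto.
    + apply in_split in Hin. destruct Hin as [L1 [L3 ->]].
      apply walk_app in Hw. destruct Hw as [mid2 [Hw1' [-> _]]].
      exists L1. split; auto. split.
      * constructor.
        -- intros Hc. apply (NoDup_remove_2 L1 L3 mid2 HndL2). apply in_or_app; auto.
        -- apply NoDup_app_remove_r in HndL2; auto.
      * rewrite map_app in Hndr. apply NoDup_app_remove_r in Hndr; auto.
    + destruct (in_dec Nat.eq_dec (row mid) (map row L2)) as [Hr|Hr].
      * apply in_map_iff in Hr. destruct Hr as [y [Hy HyL]].
        apply in_split in HyL. destruct HyL as [L1 [L3 ->]].
        apply walk_app in Hw. destruct Hw as [mid2 [Hw1' [-> _]]].
        exists (L1 ++ [mid2]). split.
        -- apply walk_snoc; auto. unfold edge in *. rewrite Hy. auto.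
        -- replace (L1 ++ mid2 :: L3) with ((L1 ++ [mid2]) ++ L3) in *
             by (rewrite <- app_assoc; auto).
           split.
           ++ constructor.
              ** intros Hc. apply Hnin. right. apply in_or_app; auto.
              ** apply NoDup_app_remove_r in HndL2; auto.
           ++ rewrite map_app in Hndr. apply NoDup_app_remove_r in Hndr; auto.
      * exists (L2 ++ [mid]). split; [apply walk_snoc; auto|]. split.
        -- constructor.
           ++ intros Hc. apply in_app_or in Hc.
              destruct Hc as [Hc|[Hc|[]]]; apply Hnin; [right|left]; auto.
           ++ apply NoDup_app; auto; [constructor; [intros []|constructor]|].
              intros a Ha [<-|[]]; auto.
        -- rewrite map_app. apply NoDup_app; auto. constructor; [intros []|constructor].
           intros a Ha [<-|[]]; auto.
Qed.

Lemma discounted_approx_reach_nonpos (u d : nat -> R) (j0 : nat) :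
  discounted_approx u d -> (j0 < n)%nat ->
  exists l L, (l < n)%nat /\ walk j0 l L /\ u l <= 0.
Proof.
  intros H Hj0.
  pose proof (discounted_approx_policy_eq u d H) as Hu.
  set (Reach := fun l => exists L, walk j0 l L).
  destruct (classic (exists l, (l < n)%nat /\ Reach l /\ u l <= 0)) as [[l [Hl [[L HL] Hul]]]|Hn];
    [exists l, L; auto|exfalso].
  (* Otherwise [u > 0] on the closed set of vertices reachable from [j0]; at the maximum of
     [w - u] over that set, the two equations force [w - u <= - min u], contradicting
     [|w - u| < min u] at [j0]. *)
  assert (Hpos : forall l, (l < n)%nat -> Reach l -> 0 < u l).
  { intros l Hl HRl. apply Rnot_le_lt. intros Hle. apply Hn. eauto. }
  assert (HR0 : Reach j0) by (exists []; reflexivity).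
  assert (Hcl : forall l l2,
             (l < n)%nat -> Reach l -> (l2 < n)%nat -> 0 < P (row l) l2 -> Reach l2).
  { intros l l2 Hl [L HL] Hl2 Hp. exists (L ++ [l]). apply walk_snoc; auto. split; auto. }
  destruct (exists_argmin_on Reach u n) as [s1 [Hs1 [HRs1 Hmin]]]; [eauto|].
  set (mu := u s1). assert (Hmu : 0 < mu) by (apply Hpos; auto).
  destruct (H mu Hmu) as [al [Hal [_ [w [Hw Hc]]]]].
  set (z := fun l => w l - u l).
  destruct (exists_argmax_on Reach z n) as [j [Hj [HRj Hmax]]]; [eauto|].
  assert (Hr : prob_vector n (P (row j))) by (apply HP, Hrow; auto).
  assert (Emv : matvec n P w (row j) = matvec n P z (row j) + matvec n P u (row j)).
  { rewrite <- matvec_plus. apply matvec_ext. intros l Hl. unfold z. ring. }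
  assert (Hz : matvec n P z (row j) <= z j).
  { apply matvec_le_of_support; auto. intros l Hl Hp. apply Hmax; eauto. }
  assert (Hm : mu <= matvec n P u (row j)).
  { apply matvec_ge_of_support; auto. intros l Hl Hp. apply Hmin; eauto. }
  assert (Ezj : z j = al * matvec n P z (row j) - (1 - al) * matvec n P u (row j)).
  { unfold z at 1. rewrite (Hw j Hj), (Hu j Hj), Emv. ring. }
  assert (Hzj : z j <= - mu).
  { assert (al * matvec n P z (row j) <= al * z j) by (apply Rmult_le_compat_l; lra).
    assert ((1 - al) * mu <= (1 - al) * matvec n P u (row j)) by (apply Rmult_le_compat_l; lra).
    nra. }
  assert (z j0 <= z j) by (apply Hmax; auto).
  specialize (Hc j0 Hj0). apply Rabs_def2 in Hc. unfold z in *. lra.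
Qed.

Variables (Q : nat -> nat -> Z) (M : Z).
Hypothesis HM : (0 < M)%Z.
Hypothesis HPQ : forall h l, (h < q)%nat -> (l < n)%nat -> P h l = IZR (Q h l) / IZR M.

Lemma one_le_M : 1 <= IZR M.
Proof. apply IZR_le. lia. Qed.

Lemma prob_ge_inv_denom (h s : nat) : (h < q)%nat -> (s < n)%nat -> 0 < P h s -> / IZR M <= P h s.
Proof.
  intros Hh Hs Hp. rewrite HPQ in * by auto.
  assert (HMr : 0 < IZR M) by (apply IZR_lt; auto).
  assert (HQ : (0 < Q h s)%Z).
  { apply lt_IZR. apply Rmult_lt_reg_r with (/ IZR M); [apply Rinv_0_lt_compat; auto|lra]. }
  assert (1 <= IZR (Q h s)) by (apply IZR_le; lia).
  assert (0 < / IZR M) by (apply Rinv_0_lt_compat; auto).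
  unfold Rdiv. nra.
Qed.

Lemma prob_one_of_deterministic (h s : nat) : (h < q)%nat -> (s < n)%nat -> 0 < P h s ->
  nondetb n P h = false -> P h s = 1.
Proof.
  intros Hh Hs Hp Hnd. destruct (HP h Hh) as [Hnn Hsum].
  rewrite <- Hsum. symmetry. apply sumR_eq_term; auto. intros l Hl Hne.
  destruct (Hnn l Hl) as [Hpos|]; auto. exfalso.
  assert (Hposb : forall x, 0 < x -> posb x = true).
  { intros x Hx. unfold posb. destruct (Rlt_dec 0 x); [reflexivity|contradiction]. }
  enough (nondetb n P h = true) by congruence.
  apply existsb_exists. exists l. split; [apply in_seq; lia|].
  apply existsb_exists. exists s. split; [apply in_seq; lia|].
  rewrite !Hposb by auto. apply Nat.eqb_neq in Hne. rewrite Hne. reflexivity.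
Qed.

Definition nondet_weight (h : nat) : nat := if nondetb n P h then 1%nat else 0%nat.

Lemma one_le_prob_weighted (h s : nat) : (h < q)%nat -> (s < n)%nat -> 0 < P h s ->
  1 <= P h s * IZR M ^ nondet_weight h.
Proof.
  intros Hh Hs Hp. unfold nondet_weight. destruct (nondetb n P h) eqn:E; simpl.
  - pose proof (prob_ge_inv_denom h s Hh Hs Hp).
    assert (HMr : 0 < IZR M) by (apply IZR_lt; auto).
    apply Rmult_le_compat_r with (r := IZR M) in H; [|lra].
    rewrite Rinv_l in H; lra.
  - rewrite prob_one_of_deterministic by auto. lra.
Qed.

Definition nondet_visits (L : list nat) : nat :=
  length (filter (fun x => nondetb n P (row x)) L).

(* Along an edge [s -> s2] of probability [p], the policy equation and [u <= K] give
   [p (K - u s2) <= K - u s + D]. *)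
Lemma walk_gap_bound (u d : nat -> R) (D K : R) :
  (forall j, (j < n)%nat -> u j = d j + matvec n P u (row j)) ->
  (forall l, (l < n)%nat -> u l <= K) -> (forall j, (j < n)%nat -> d j <= D) -> 0 <= D ->
  forall L s t, walk s t L -> (s < n)%nat ->
  K - u t <= (K - u s + D * INR (length L)) * IZR M ^ nondet_visits L.
Proof.
  intros Hu HK Hd HD. pose proof one_le_M as HM1.
  induction L as [|x L IH]; intros s t Hw Hs; simpl in Hw.
  - subst. unfold nondet_visits. simpl. lra.
  - destruct Hw as [-> [s2 [[Hs2 Hp] Hw]]].
    specialize (IH s2 t Hw Hs2).
    assert (Hh : (row s < q)%nat) by auto.
    assert (Hstep : P (row s) s2 * (K - u s2) <= K - u s + D).
    { pose proof (matvec_le_sub_weight n P (row s) (HP _ Hh) u K s2 HK Hs2).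
      rewrite (Hu s Hs). specialize (Hd s Hs). lra. }
    pose proof (one_le_prob_weighted (row s) s2 Hh Hs2 Hp) as Hf.
    assert (Hcnt : nondet_visits (s :: L) = (nondet_weight (row s) + nondet_visits L)%nat).
    { unfold nondet_visits, nondet_weight. simpl. destruct (nondetb n P (row s)); reflexivity. }
    rewrite Hcnt, pow_add. change (length (s :: L)) with (S (length L)). rewrite S_INR.
    set (me := IZR M ^ nondet_weight (row s)) in *.
    set (mc := IZR M ^ nondet_visits L) in *.
    assert (Hme : 1 <= me) by (apply pow_R1_Rle; auto).
    assert (Hmc : 1 <= mc) by (apply pow_R1_Rle; auto).
    assert (HKs2 : 0 <= K - u s2) by (specialize (HK s2 Hs2); lra).
    assert (HKs : 0 <= K - u s) by (specialize (HK s Hs); lra).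
    assert (HL : 0 <= D * INR (length L)) by (apply Rmult_le_pos; auto; apply pos_INR).
    assert (H2 : K - u s2 <= (K - u s + D) * me) by nra.
    apply Rle_trans with ((K - u s2 + D * INR (length L)) * mc); auto.
    assert (K - u s2 + D * INR (length L) <= (K - u s + D * (INR (length L) + 1)) * me) by nra.
    nra.
Qed.

Lemma discounted_approx_upper_bound (u d : nat -> R) (D : R) :
  discounted_approx u d -> (forall j, (j < n)%nat -> d j <= D) -> 0 <= D ->
  forall j, (j < n)%nat -> u j <= D * INR (n - 1) * IZR M ^ Nat.min (num_nondet n q P) (n - 1).
Proof.
  intros H Hd HD j Hj. pose proof one_le_M as HM1.
  pose proof (discounted_approx_policy_eq u d H) as Hu.
  destruct (exists_argmax_on (fun _ => True) u n) as [j0 [Hj0 [_ Hmax]]]; [eauto|].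
  destruct (discounted_approx_reach_nonpos u d j0 H Hj0) as [l [L0 [Hl [HL0 Hul]]]].
  destruct (walk_simplify j0 l L0 HL0) as [L [HL [Hnd Hndr]]].
  pose proof (walk_gap_bound u d D (u j0) Hu (fun l Hl => Hmax l Hl I) Hd HD L j0 l HL Hj0) as G.
  pose proof (walk_in_range j0 l L HL Hj0) as Hrange.
  (* A simple path visits at most [n] vertices and at most [k] distinct nondeterministic rows. *)
  assert (Hlen : (length L <= n - 1)%nat).
  { assert (length (l :: L) <= length (seq 0 n))%nat.
    { apply NoDup_incl_length; auto. intros x Hx. apply in_seq. specialize (Hrange x Hx). lia. }
    rewrite length_seq in H0. simpl in H0. lia. }
  assert (Hcnt1 : (nondet_visits L <= length L)%nat) by apply filter_length_le.
  assert (Hcnt2 : (nondet_visits L <= num_nondet n q P)%nat).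
  { assert (E : nondet_visits L = length (filter (nondetb n P) (map row L))).
    { unfold nondet_visits. clear. induction L as [|x L IH]; simpl; auto.
      destruct (nondetb n P (row x)); simpl; auto. }
    rewrite E. unfold num_nondet. apply NoDup_incl_length; [apply NoDup_filter; auto|].
    intros x Hx. apply filter_In in Hx. destruct Hx as [Hx Hb]. apply filter_In. split; auto.
    apply in_map_iff in Hx. destruct Hx as [y [<- Hy]]. apply in_seq.
    split; [lia|]. simpl. apply Hrow. apply Hrange. right. auto. }
  assert (Hpow : IZR M ^ nondet_visits L <= IZR M ^ Nat.min (num_nondet n q P) (n - 1))
    by (apply Rle_pow; auto; lia).
  assert (Hlen' : D * INR (length L) <= D * INR (n - 1))
    by (apply Rmult_le_compat_l; auto; apply le_INR; auto).
  assert (0 <= D * INR (length L)) by (apply Rmult_le_pos; auto; apply pos_INR).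
  assert (1 <= IZR M ^ nondet_visits L) by (apply pow_R1_Rle; auto).
  assert (u j <= u j0) by (apply Hmax; auto).
  replace (u j0 - u j0) with 0 in G by ring.
  assert (D * INR (length L) * IZR M ^ nondet_visits L
          <= D * INR (n - 1) * IZR M ^ Nat.min (num_nondet n q P) (n - 1))
    by (apply Rmult_le_compat; lra).
  lra.
Qed.

Lemma discounted_approx_hilbert (u d : nat -> R) (D : R) :
  discounted_approx u d -> (forall j, (j < n)%nat -> Rabs (d j) <= D) ->
  hilbert n u <= 2 * (D * INR (n - 1) * IZR M ^ Nat.min (num_nondet n q P) (n - 1)).
Proof.
  intros H Hd.
  destruct (Nat.eq_dec n 0) as [Hn0|Hn].
  { rewrite Hn0. unfold hilbert, maxI, minI. simpl. lra. }
  assert (HD : 0 <= D) by (eapply Rle_trans; [apply Rabs_pos | apply (Hd 0%nat); lia]).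
  assert (Hdu : forall j, (j < n)%nat -> d j <= D)
    by (intros j Hj; apply (Rabs_le_between _ _ (Hd j Hj))).
  assert (Hdl : forall j, (j < n)%nat -> - d j <= D)
    by (intros j Hj; pose proof (Rabs_le_between _ _ (Hd j Hj)); lra).
  assert (0 <= D * INR (n - 1) * IZR M ^ Nat.min (num_nondet n q P) (n - 1)).
  { pose proof one_le_M. apply Rmult_le_pos; [apply Rmult_le_pos; auto; apply pos_INR|].
    apply pow_le. lra. }
  apply hilbert_le; [lra|]. intros j l Hj Hl.
  pose proof (discounted_approx_upper_bound u d D H Hdu HD j Hj).
  pose proof (discounted_approx_upper_bound _ _ D (discounted_approx_opp u d H) Hdl HD l Hl).
  lra.
Qed.

End PolicyEquation.

Definition fin_part (o : trop) : R := match o with Some a => a | None => 0 end.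

Lemma exists_is_inf_of_lower_bound (S : R -> Prop) (b : R) :
  (exists s, S s) -> (forall s, S s -> b <= s) -> exists r, is_inf S r.
Proof.
  intros Hne Hb.
  destruct (completeness (fun x => S (- x))) as [lub [Hub Hleast]].
  - exists (- b). intros x Hx. specialize (Hb _ Hx). lra.
  - destruct Hne as [s Hs]. exists (- s). now rewrite Ropp_involutive.
  - exists (- lub). split.
    + intros s Hs. enough (- s <= lub) by lra. apply Hub. now rewrite Ropp_involutive.
    + intros c Hc. enough (lub <= - c) by lra. apply Hleast. intros x Hx. specialize (Hc _ Hx). lra.
Qed.

Section BlackwellBias.

Variables (m n q : nat) (A B : nat -> nat -> trop) (P : nat -> nat -> R).
Hypothesis HA : finite_cols m n A.
Hypothesis HB : finite_rows m q B.
Hypothesis HP : stochastic n q P.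

Variables (lam : R) (va : R -> nat -> R) (vstar : nat -> R).
Hypothesis Hva : forall alpha, 0 < alpha < 1 -> forall j, (j < n)%nat ->
  va alpha j = Fop m n q A B P (fun l => alpha * va alpha l) j.
Hypothesis Hlim : forall j, (j < n)%nat ->
  limit1_in (fun alpha => va alpha j - lam / (1 - alpha)) (fun alpha => 0 < alpha < 1) (vstar j) 1.

Lemma blackwell_uniform (e : R) : 0 < e -> exists dl, 0 < dl /\
  forall al, 0 < al < 1 -> 1 - dl < al ->
  forall j, (j < n)%nat -> Rabs (va al j - lam / (1 - al) - vstar j) < e.
Proof.
  intros He. destruct (limit1_in_uniform n (fun al j => va al j - lam / (1 - al)) vstar
                         (fun al => 0 < al < 1) 1 Hlim e He) as [dl [Hdl H]].
  exists dl. split; auto. intros al Hal Hal2. apply H; auto. rewrite Rabs_left; lra.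
Qed.

(* Finitely many pairs (i, h) are available, so some stationary choice of optimal pairs is
   optimal for discount factors arbitrarily close to 1; along those, the normalized values
   [va al - lam / (1 - al)] solve the discounted equation of that policy with reward
   [r - lam], and converge to [vstar]. *)
Lemma blackwell_policy : exists (row : nat -> nat) (r : nat -> R),
  (forall j, (j < n)%nat -> (row j < q)%nat) /\
  (forall j, (j < n)%nat -> Rabs (r j) <= Wconst m n q A B) /\
  discounted_approx n P row vstar (fun j => r j - lam).
Proof.
  set (optimal := fun al (p : nat * nat) j =>
    (fst p < m)%nat /\ (snd p < q)%nat /\ A (fst p) j <> None /\ B (fst p) (snd p) <> None /\
    Fop m n q A B P (fun l => al * va al l) j =
      - fin_part (A (fst p) j) + fin_part (B (fst p) (snd p))
      + matvec n P (fun l => al * va al l) (snd p)).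
  destruct (often_near1_choice (nat * nat) (0%nat, 0%nat) (list_prod (seq 0 m) (seq 0 q))
              optimal n) as [c Hc].
  { intros al Hal j Hj.
    destruct (Fop_attained m n q A B P HA HB (fun l => al * va al l) j Hj)
      as [i [h [a [b [Hi [Hh [Ha [Hb E]]]]]]]].
    exists (i, h). split; [apply in_prod; apply in_seq; lia|].
    unfold optimal; simpl. rewrite Ha, Hb, E. repeat split; auto; discriminate. }
  set (r := fun j => - fin_part (A (fst (c j)) j) + fin_part (B (fst (c j)) (snd (c j)))).
  destruct (Hc 1 ltac:(lra)) as [al1 [_ [_ Hopt1]]].
  exists (fun j => snd (c j)), r. split; [|split].
  - intros j Hj. apply Hopt1; auto.
  - intros j Hj. destruct (Hopt1 j Hj) as [Hi [Hh [Ha [Hb _]]]].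
    unfold r. destruct (A (fst (c j)) j) as [a|] eqn:Ea; [|congruence].
    destruct (B (fst (c j)) (snd (c j))) as [b|] eqn:Eb; [|congruence]. simpl.
    replace (- a + b) with (- (a - b)) by ring. rewrite Rabs_Ropp.
    apply (Wconst_ge m n q A B _ _ _ a b Hi Hj Hh Ea Eb).
  - intros e He. destruct (blackwell_uniform e He) as [dl [Hdl Hclose]].
    destruct (Hc (Rmin dl e) (Rmin_glb_lt _ _ _ Hdl He)) as [al [Hal [Hal2 Hopt]]].
    pose proof (Rmin_l dl e). pose proof (Rmin_r dl e).
    exists al. split; [auto|split; [lra|]].
    exists (fun l => va al l - lam / (1 - al)). split.
    + intros j Hj. destruct (Hopt j Hj) as [_ [Hh [_ [_ E]]]].
      rewrite (Hva al Hal j Hj), E, matvec_scal.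
      rewrite (matvec_ext n P (snd (c j)) (va al)
                 (fun l => (va al l - lam / (1 - al)) + lam / (1 - al))) by (intros; ring).
      rewrite matvec_shift by (apply HP; auto).
      unfold r. field. lra.
    + intros j Hj. apply Hclose; auto. lra.
Qed.

Lemma blackwell_bias : is_bias n (Fop m n q A B P) vstar lam.
Proof.
  intros j Hj.
  set (Cv := sumR (fun l => Rabs (vstar l)) n).
  assert (HCv : forall l, (l < n)%nat -> Rabs (vstar l) <= Cv)
    by (intros l Hl; apply (sumR_ge_term (fun l => Rabs (vstar l))); auto; intros; apply Rabs_pos).
  cut (Fop m n q A B P vstar j - lam - vstar j = 0); [lra|].
  apply (eq0_of_Rabs_le_eps _ (3 + Cv)). intros e He.
  destruct (blackwell_uniform e ltac:(lra)) as [dl [Hdl Hclose]].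
  destruct (often_near1_True (Rmin dl e) (Rmin_glb_lt dl e 0 Hdl ltac:(lra)))
    as [al [Hal [Hal2 _]]].
  pose proof (Rmin_l dl e). pose proof (Rmin_r dl e).
  set (c := lam / (1 - al)). set (w := fun l => va al l - c).
  assert (Hw : forall l, (l < n)%nat -> Rabs (w l - vstar l) < e)
    by (intros l Hl; apply Hclose; auto; lra).
  assert (Eig : Fop m n q A B P (fun l => al * w l) j = w j + lam).
  { replace (fun l => al * w l) with (fun l => al * va al l + - (al * c))
      by (extensionality l; unfold w; ring).
    rewrite Fop_shift, <- Hva by auto. unfold w, c. field. lra. }
  assert (Hvw : forall l, (l < n)%nat -> Rabs (vstar l - al * w l) <= e * (2 + Cv)).
  { intros l Hl. pose proof (Hw l Hl) as K1. pose proof (HCv l Hl) as K2.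
    apply Rabs_def2 in K1. apply Rabs_le_between in K2. apply Rabs_le. split; nra. }
  pose proof (Fop_nonexpansive m n q A B P HA HB HP _ _ _ j Hj Hvw).
  pose proof (Hw j Hj) as Hwj. apply Rabs_def2 in Hwj.
  apply Rabs_le_between in H1. rewrite Eig in H1. apply Rabs_le. split; nra.
Qed.

End BlackwellBias.

Theorem mainTheorem10
  (m n q : nat) (A B : nat -> nat -> trop) (P : nat -> nat -> R)
  (Q : nat -> nat -> Z) (M : Z)
  (HAcol : forall j, (j < n)%nat -> exists i, (i < m)%nat /\ A i j <> None)
  (HBrow : forall i, (i < m)%nat -> exists h, (h < q)%nat /\ B i h <> None)
  (HAint : forall i j a, (i < m)%nat -> (j < n)%nat -> A i j = Some a -> exists z : Z, a = IZR z)
  (HBint : forall i h b, (i < m)%nat -> (h < q)%nat -> B i h = Some b -> exists z : Z, b = IZR z)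
  (HM : (0 < M)%Z)
  (HPQ : forall i l, (i < q)%nat -> (l < n)%nat -> P i l = IZR (Q i l) / IZR M)
  (HPnn : forall i l, (i < q)%nat -> (l < n)%nat -> 0 <= P i l)
  (HPsum : forall i, (i < q)%nat -> sumR (P i) n = 1)
  (lam : R) (v0 : nat -> R)
  (Hbias : is_bias n (Fop m n q A B P) v0 lam)
  (va : R -> nat -> R)
  (Hva : forall alpha, 0 < alpha < 1 -> forall j, (j < n)%nat ->
         va alpha j = Fop m n q A B P (fun l => alpha * va alpha l) j)
  (vstar : nat -> R)
  (Hlim : forall j, (j < n)%nat ->
          limit1_in (fun alpha => va alpha j - lam / (1 - alpha))
                    (fun alpha => 0 < alpha < 1) (vstar j) 1) :
  exists RF : R,
    is_inf (fun r => exists u, is_bias n (Fop m n q A B P) u lam /\ r = hilbert n u) RF /\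
    RF <= hilbert n vstar /\
    hilbert n vstar <= 10 * INR n ^ 2 * Wconst m n q A B
                        * IZR M ^ (Nat.min (num_nondet n q P) (n - 1)).
Proof.
  assert (HP : stochastic n q P) by (intros h Hh; split; auto).
  pose proof (blackwell_bias m n q A B P HAcol HBrow HP lam va vstar Hva Hlim) as Hvstar.
  destruct (blackwell_policy m n q A B P HAcol HBrow HP lam va vstar Hva Hlim)
    as [row [r [Hrow [Hr Happrox]]]].
  pose proof (discounted_approx_hilbert n q P row HP Hrow Q M HM HPQ vstar _ _ Happrox
                (discounted_approx_reward_bound n q P row HP Hrow vstar r lam _ Happrox Hr))
    as Hhilbert.
  destruct (exists_is_inf_of_lower_bound
              (fun r => exists u, is_bias n (Fop m n q A B P) u lam /\ r = hilbert n u) 0)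
    as [RF HRF].
  { exists (hilbert n vstar), vstar. auto. }
  { intros s [u [_ ->]]. apply hilbert_nonneg. }
  exists RF. split; [exact HRF | split; [apply HRF; eauto|]].
  assert (Hn : INR (n - 1) <= INR n ^ 2).
  { destruct n as [|n']; [simpl; lra|].
    replace (S n' - 1)%nat with n' by lia. rewrite S_INR. pose proof (pos_INR n'). nra. }
  assert (0 <= Wconst m n q A B * IZR M ^ Nat.min (num_nondet n q P) (n - 1)).
  { apply Rmult_le_pos; [apply Wconst_nonneg|]. apply pow_le. apply IZR_le. lia. }
  nra.
Qed.
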